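(* Let $n\ge 1$ and let $\pi$ be a layered permutation of length $n$ which is not a decreasing permutation of even length. Then $\zeta_n$ contains a subsequence order-isomorphic to $\pi$.
   Context: A permutation of length $n$ is a word containing each letter of $[n]$ exactly once. For permutations $\pi$ of length $m$ and $\sigma$ of length $n$, $\pi\oplus\sigma$ is the permutation with $(\pi\oplus\sigma)(i)=\pi(i)$ for $i\le m$ and $\sigma(i-m)+m$ for $i>m$. A permutation is layered if it is a direct sum of decreasing permutations. Two words $u,v$ of length $k$ are order-isomorphic if $u(i)>u(j)\iff v(i)>v(j)$ for all $i,j$; a word $w$ contains a subsequence order-isomorphic to $\pi$ if some $w(i_1)\cdots w(i_n)$ with $i_1<\cdots<i_n$ is order-isomorphic to $\pi$. The word $z_n$ is the concatenation of $n$ runs $r_1\cdots r_n$, where for odd $k$, $r_k$ lists the odd integers in $[n]$ increasingly and for even $k$, $r_k$ lists the even integers in $[n]$ decreasingly. The permutation $\zeta_n$ of length $|z_n|$ is the unique permutation such that for $i\ne j$: $\zeta_n(i)>\zeta_n(j)$ iff either $z_n(i)>z_n(j)$, or $z_n(i)=z_n(j)$ and $i<j$. *)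

(* Permutations/words are sequences of naturals (letters 1..n). *)
From mathcomp Require Import all_boot.
Set Implicit Arguments. Unset Strict Implicit. Unset Printing Implicit Defensive.

Definition is_perm (s : seq nat) : Prop := perm_eq s (iota 1 (size s)).

Definition dsum (p q : seq nat) : seq nat := p ++ map (addn (size p)) q.

Definition decr (k : nat) : seq nat := rev (iota 1 k).

Definition layered (p : seq nat) : Prop :=
  exists ks : seq nat, p = foldr (fun k acc => dsum (decr k) acc) [::] ks.

Definition order_iso (u v : seq nat) : Prop :=
  size u = size v /\
  forall i j, i < size u -> j < size u ->
    (nth 0 u j < nth 0 u i) = (nth 0 v j < nth 0 v i).

Definition contains (w p : seq nat) : Prop :=
  exists m : bitseq, size m = size w /\ order_iso (mask m w) p.

(* the k-th run of z_n (k >= 1) *)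
Definition zrun (n k : nat) : seq nat :=
  if odd k then [seq x <- iota 1 n | odd x]
  else rev [seq x <- iota 1 n | ~~ odd x].

Definition zword (n : nat) : seq nat := flatten [seq zrun n k | k <- iota 1 n].

Definition is_zeta (n : nat) (zeta : seq nat) : Prop :=
  is_perm zeta /\ size zeta = size (zword n) /\
  forall i j, i < size zeta -> j < size zeta -> i != j ->
    (nth 0 zeta j < nth 0 zeta i) =
    ((nth 0 (zword n) j < nth 0 (zword n) i) ||
     ((nth 0 (zword n) i == nth 0 (zword n) j) && (i < j))).

From mathcomp Require Import all_boot zify.
Set Implicit Arguments. Unset Strict Implicit. Unset Printing Implicit Defensive.

(* Write pi as decr k_1 (+) ... (+) decr k_m. The letter y of the run r_c of
   z_n is the point (c, y), with c and y of the same parity, and the order of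
   z_n is run by run, increasing in odd runs and decreasing in even ones. A
   layer of size k is placed on a diagonal (c, y), (c+1, y-1), ..., strictly to
   the right of and above the previous layers. Placing the layers greedily
   embeds a layered permutation of size b in the first b runs (rounded up to an
   odd number) using letters <= b, which settles odd n. For even b parity costs
   one run or one letter; one keeps two embeddings, one saving a run and one
   saving a letter, and a hook (a layer whose two first letters are equal
   letters of runs c and c+2, hence a descent in zeta_n) trades a run for a
   letter. Only a single layer of even size defeats this. *)

Lemma size_dsum p q : size (dsum p q) = size p + size q.
Proof. by rewrite /dsum size_cat size_map. Qed.

Lemma size_decr k : size (decr k) = k.
Proof. by rewrite /decr size_rev size_iota. Qed.

Lemma nth_decr k a : a < k -> nth 0 (decr k) a = k - a.
Proof. by move=> ak; rewrite /decr nth_rev ?size_iota // nth_iota; lia. Qed.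

Lemma mem_decr k x : (x \in decr k) = (0 < x <= k).
Proof. by rewrite /decr mem_rev mem_iota; lia. Qed.

Lemma dsum0s q : dsum [::] q = q.
Proof. by rewrite /dsum map_id. Qed.

Lemma dsums0 p : dsum p [::] = p.
Proof. by rewrite /dsum cats0. Qed.

Lemma dsumA p q r : dsum p (dsum q r) = dsum (dsum p q) r.
Proof.
rewrite /dsum map_cat catA size_cat size_map -map_comp.
by congr (_ ++ _); apply: eq_map => x /=; rewrite addnA.
Qed.

Definition dsum_decr (ks : seq nat) : seq nat :=
  foldr (fun k acc => dsum (decr k) acc) [::] ks.

Lemma dsum_decr_rcons ks k : dsum_decr (rcons ks k) = dsum (dsum_decr ks) (decr k).
Proof. by elim: ks => [|k' ks IH] /=; rewrite ?dsums0 ?dsum0s // IH dsumA. Qed.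

Lemma size_dsum_decr ks : size (dsum_decr ks) = sumn ks.
Proof. by elim: ks => //= k ks IH; rewrite size_dsum size_decr IH. Qed.

Lemma dsum_decr_filter ks : dsum_decr [seq k <- ks | 0 < k] = dsum_decr ks.
Proof. by elim: ks => [|[|k] ks IH] //=; rewrite IH // dsum0s. Qed.

Lemma dsum_decr_le_size ks : all (fun x => x <= sumn ks) (dsum_decr ks).
Proof.
elim: ks => //= k ks IH; rewrite /dsum all_cat all_map size_decr.
apply/andP; split; apply/allP => x.
- by rewrite mem_decr; lia.
- by move/(allP IH) => /=; lia.
Qed.

Definition same_ascents (u v : seq nat) : bool :=
  pairwise (fun p q : nat * nat => (p.1 < q.1) == (p.2 < q.2)) (zip u v).

Lemma same_ascentsP u v : size u = size v ->
  reflect (forall a b, a < b < size u ->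
             (nth 0 u a < nth 0 u b) = (nth 0 v a < nth 0 v b))
          (same_ascents u v).
Proof.
move=> suv; have sz : size (zip u v) = size u by rewrite size1_zip ?suv.
apply: (iffP (pairwiseP (0, 0))); rewrite sz.
- move=> h a b /andP [ab bu].
  by have := h a b (ltn_trans ab bu) bu ab; rewrite !nth_zip //= => /eqP.
- by move=> h a b au bu ab; rewrite !nth_zip //; apply/eqP/h/andP.
Qed.

Lemma same_ascents_mask m u v : size u = size v ->
  same_ascents u v -> same_ascents (mask m u) (mask m v).
Proof.
move=> suv; rewrite /same_ascents => /(pairwise_mask m).
rewrite -[mask m (zip u v)]zip_unzip /unzip1 /unzip2 !map_mask.
by rewrite -/(unzip1 _) -/(unzip2 _) unzip1_zip ?unzip2_zip ?suv.
Qed.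

Lemma same_ascents_trans u v w : size u = size v -> size v = size w ->
  same_ascents u v -> same_ascents v w -> same_ascents u w.
Proof.
move=> suv svw /(same_ascentsP suv) huv /(same_ascentsP svw) hvw.
by apply/same_ascentsP; [lia | move=> a b ab; rewrite huv // hvw -?suv].
Qed.

Lemma same_ascents_order_iso u v : size u = size v -> uniq u -> uniq v ->
  same_ascents u v -> order_iso u v.
Proof.
move=> suv uu uv /(same_ascentsP suv) h; split => // i j iu ju.
have [ij|ji|->] := ltngtP i j; last by rewrite !ltnn.
- have flip w : uniq w -> j < size w ->
      (nth 0 w j < nth 0 w i) = ~~ (nth 0 w i < nth 0 w j).
    by move=> uw jw; rewrite ltnNge leq_eqVlt nth_uniq ?(ltn_eqF ij) //; lia.
  by rewrite !flip -?suv // h ?ij.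
- by apply: h; rewrite ji.
Qed.

Lemma same_ascents_dsum (u v s t : seq nat) :
  size u = size s -> size v = size t ->
  all (fun x => x <= size s) s -> all (fun x => 0 < x) t ->
  (forall x y, x \in u -> y \in v -> x < y) ->
  same_ascents u s -> same_ascents v t -> same_ascents (u ++ v) (dsum s t).
Proof.
move=> su sv hs ht huv /(same_ascentsP su) hus /(same_ascentsP sv) hvt.
apply/same_ascentsP; first by rewrite size_cat size_dsum su sv.
move=> a b /andP [ab]; rewrite size_cat => bs.
rewrite /dsum !nth_cat -su; case: (ltnP b (size u)) => bu.
  by rewrite (ltn_trans ab bu) hus ?ab.
have nth_shift c : c < size v -> nth 0 (map (addn (size u)) t) c = size u + nth 0 t c.
  by move=> cv; rewrite (nth_map 0) // -sv.
have bv : b - size u < size v by lia.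
have tb : 0 < nth 0 t (b - size u) by apply: (allP ht); rewrite mem_nth -?sv.
rewrite (nth_shift _ bv).
case: (ltnP a (size u)) => au; last by rewrite nth_shift ?ltn_add2l ?hvt //; lia.
have sa : nth 0 s a <= size u.
  by rewrite su; apply: (allP hs); apply: mem_nth; rewrite -su.
by rewrite huv ?mem_nth //; lia.
Qed.

Lemma same_ascents_decr u :
  pairwise (fun x y => y <= x) u -> same_ascents u (decr (size u)).
Proof.
move/(pairwiseP 0) => hu; apply/same_ascentsP; first by rewrite size_decr.
move=> a b /andP [ab bu]; rewrite !nth_decr //; last lia.
by have := hu a b (ltn_trans ab bu) bu ab; lia.
Qed.

Notation point := (nat * nat)%type.

(* The point (c, y) stands for the letter y of the run r_c; zlt is the order
   of these letters in z_n. *)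
Definition zlt (p q : point) : bool :=
  (p.1 < q.1) || (p.1 == q.1) && (if odd p.1 then p.2 < q.2 else q.2 < p.2).

Lemma zlt_irr : irreflexive zlt.
Proof. by move=> [c y]; rewrite /zlt /= ltnn eqxx; case: (odd c); rewrite ltnn. Qed.

Lemma zlt_trans : transitive zlt.
Proof.
move=> [c2 y2] [c1 y1] [c3 y3]; rewrite /zlt /=.
case/orP => [h12|/andP [/eqP e12 h12]]; case/orP => [h23|/andP [/eqP e23 h23]].
- by rewrite (ltn_trans h12 h23).
- by rewrite -e23 h12.
- by rewrite e12 h23.
- by subst; rewrite ltnn eqxx /=; case: (odd c3) h12 h23 => /= *; lia.
Qed.

Definition in_box (R V : nat) (p : point) : bool :=
  [&& 0 < p.1 <= R, 0 < p.2 <= V & odd p.1 == odd p.2].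

Definition zpoints (n : nat) : seq point :=
  flatten [seq [seq (c, y) | y <- zrun n c] | c <- iota 1 n].

Lemma zword_zpoints n : zword n = map snd (zpoints n).
Proof.
rewrite /zword /zpoints map_flatten -map_comp.
by congr flatten; apply: eq_map => c /=; rewrite -map_comp map_id.
Qed.

Lemma mem_zrun n c y : (y \in zrun n c) = (0 < y <= n) && (odd c == odd y).
Proof.
by rewrite /zrun; case: ifP => oc; rewrite ?mem_rev mem_filter mem_iota;
  case: (odd y); rewrite /= ?andbT ?andbF; lia.
Qed.

Lemma mem_zpoints n p : (p \in zpoints n) = in_box n n p.
Proof.
case: p => c y; rewrite /in_box /=; apply/flatten_mapP/idP.
  case=> c'; rewrite mem_iota => hc /mapP [y' hy [-> ->]].
  by move: hy; rewrite mem_zrun; lia.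
move=> /and3P [hc hy hp]; exists c; first by rewrite mem_iota; lia.
by apply: map_f; rewrite mem_zrun hy hp.
Qed.

Lemma pairwise_zrun n c :
  pairwise (fun y y' => if odd c then y < y' else y' < y) (zrun n c).
Proof.
have gtn_trans : transitive (fun y y' : nat => y' < y).
  by move=> x y z h1 h2; exact: ltn_trans h2 h1.
have inc a : sorted ltn [seq x <- iota 1 n | a x].
  by apply: sorted_filter; [exact: ltn_trans | exact: iota_ltn_sorted].
rewrite /zrun; case: ifP => oc.
- by rewrite -(sorted_pairwise ltn_trans).
- by rewrite -(sorted_pairwise gtn_trans) rev_sorted.
Qed.

Lemma pairwise_zlt_zpoints n : pairwise zlt (zpoints n).
Proof.
rewrite /zpoints; elim: n {-2}n 1 => [|m IH] n a //=.
rewrite pairwise_cat IH andbT; apply/andP; split.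
- apply/allrelP => p q /mapP [y _ ->] /flatten_mapP [c].
  by rewrite mem_iota => hc /mapP [y' _ ->]; rewrite /zlt /=; apply/orP; left; lia.
- rewrite pairwise_map; apply: sub_pairwise (pairwise_zrun n a) => y y' h.
  by rewrite /zlt /= ltnn eqxx.
Qed.

Lemma subseq_zpoints n P :
  all (in_box n n) P -> pairwise zlt P -> subseq P (zpoints n).
Proof.
move=> inP zP; suff <- : [seq p <- zpoints n | p \in P] = P by exact: filter_subseq.
apply: (irr_sorted_eq zlt_trans zlt_irr).
- by apply: sorted_filter; [exact: zlt_trans | exact/pairwise_sorted/pairwise_zlt_zpoints].
- exact: pairwise_sorted.
- by move=> p; rewrite mem_filter mem_zpoints andb_idr //; move/(allP inP).
Qed.

Lemma is_zeta_same_ascents n zeta : is_zeta n zeta -> same_ascents zeta (zword n).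
Proof.
case=> _ [sz hz]; apply/same_ascentsP => // a b /andP [ab bz].
rewrite hz ?(ltn_trans ab) ?(gtn_eqF ab) // [b < a]ltnNge (ltnW ab).
by rewrite andbF orbF.
Qed.

Lemma contains_points n zeta s P : is_zeta n zeta -> uniq s ->
  all (in_box n n) P -> pairwise zlt P -> size P = size s ->
  same_ascents (map snd P) s -> contains zeta s.
Proof.
move=> hz us inP zP sP hPs; have [pz [sz _]] := hz.
have [m sm eP] := subseqP (subseq_zpoints inP zP).
have mz : mask m (zword n) = map snd P by rewrite eP zword_zpoints map_mask.
have sm' : size m = size zeta by rewrite sm sz zword_zpoints size_map.
have smz : size (mask m zeta) = size P by rewrite eP !size_mask // size_map.
exists m; split => //; apply: same_ascents_order_iso.
- by rewrite smz.
- by apply: mask_uniq; rewrite (perm_uniq pz) iota_uniq.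
- exact: us.
- apply: (same_ascents_trans _ _ _ hPs); rewrite ?size_map //.
  rewrite -mz; apply: same_ascents_mask => //; exact: is_zeta_same_ascents.
Qed.

Lemma sumn_gt0 ks : all (fun k => 0 < k) ks -> ks != [::] -> 0 < sumn ks.
Proof. by case: ks => // k ks /andP [k0 _] _ /=; lia. Qed.

(* A layer whose letters exceed all earlier ones may start in the last run R
   used so far only if that run is increasing, i.e. odd. *)
Definition odd_ceil (c : nat) : nat := c + ~~ odd c.

Lemma zlt_after R V p q :
  in_box R V p -> odd_ceil R <= q.1 -> V < q.2 -> zlt p q.
Proof.
case/and3P=> hp1 hp2 _; rewrite /odd_ceil => hq1 hq2.
rewrite /zlt; case: (ltngtP p.1 q.1) => //= e; first lia.
have -> : odd p.1 by lia.
lia.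
Qed.

Definition embeds (ks : seq nat) (R V : nat) (P : seq point) : Prop :=
  [/\ size P = sumn ks, same_ascents (map snd P) (dsum_decr ks),
      all (in_box R V) P & pairwise zlt P].

Definition embeddable (ks : seq nat) (R V : nat) : Prop :=
  exists P, embeds ks R V P.

(* Equal letters of z_n are decreasing in zeta_n, so a staircase reads as a
   decreasing pattern. *)
Definition staircase (B : seq point) : bool :=
  pairwise (fun p q => (p.1 < q.1) && (q.2 <= p.2)) B.

Lemma embeddable_nil R V : embeddable [::] R V.
Proof. by exists [::]. Qed.

Lemma embeddable_rcons ks k R V R' V' B : embeddable ks R V ->
  size B = k -> staircase B -> all (in_box R' V') B ->
  all (fun q => (odd_ceil R <= q.1) && (V < q.2)) B -> R <= R' -> V <= V' ->
  embeddable (rcons ks k) R' V'.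
Proof.
case=> P [sP aP inP zP] sB stB inB newB RR VV; exists (P ++ B); split.
- by rewrite size_cat sP sB sumn_rcons.
- rewrite map_cat dsum_decr_rcons; apply: same_ascents_dsum => //.
  + by rewrite size_map sP size_dsum_decr.
  + by rewrite size_map sB size_decr.
  + by rewrite size_dsum_decr; apply: dsum_decr_le_size.
  + by apply/allP => x; rewrite mem_decr; lia.
  + move=> _ _ /mapP [p /(allP inP) /and3P [_ hp _] ->] /mapP [q /(allP newB) hq ->].
    by lia.
  + rewrite -sB -(size_map snd); apply: same_ascents_decr.
    by rewrite pairwise_map; apply: sub_pairwise stB => p q /andP [].
- rewrite all_cat inB andbT; apply: sub_all inP => p /and3P [hp1 hp2 hp3].
  by apply/and3P; split => //; lia.
- rewrite pairwise_cat zP /=; apply/andP; split.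
    apply/allrelP => p q pP /(allP newB) /andP [hq1 hq2].
    exact: zlt_after (allP inP p pP) hq1 hq2.
  by apply: sub_pairwise stB => p q /andP [h _]; rewrite /zlt h.
Qed.

Definition diag (c y k : nat) : seq point := [seq (c + i, y - i) | i <- iota 0 k].

Lemma size_diag c y k : size (diag c y k) = k.
Proof. by rewrite size_map size_iota. Qed.

Lemma mem_diag c y k q :
  q \in diag c y k -> exists2 i, i < k & q = (c + i, y - i).
Proof. by case/mapP => i; rewrite mem_iota => hi ->; exists i. Qed.

Lemma staircase_diag c y k : staircase (diag c y k).
Proof.
rewrite /staircase pairwise_map.
have inc : pairwise ltn (iota 0 k) by rewrite -(sorted_pairwise ltn_trans) iota_ltn_sorted.
by apply: sub_pairwise inc => i j /= ij; rewrite ltn_add2l ij leq_sub2l // ltnW.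
Qed.

Lemma embeddable_diag ks k R V R' V' c y : embeddable ks R V ->
  odd_ceil R <= c -> c + k.-1 <= R' -> V + k <= y <= V' -> odd c = odd y ->
  embeddable (rcons ks k) R' V'.
Proof.
rewrite /odd_ceil => E hc hR hV hp.
apply: (embeddable_rcons E (size_diag c y k) (staircase_diag c y k)); try lia.
- by apply/allP => q /mem_diag [i ik ->]; rewrite /in_box /=; lia.
- by apply/allP => q /mem_diag [i ik ->]; rewrite /odd_ceil /=; lia.
Qed.

Definition hook (c y k : nat) : seq point := (c, y) :: diag c.+2 y k.-1.

Lemma embeddable_hook ks k R V R' V' c y : embeddable ks R V -> 1 < k ->
  odd_ceil R <= c -> c + k <= R' -> V + k <= y.+1 -> y <= V' -> odd c = odd y ->
  embeddable (rcons ks k) R' V'.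
Proof.
rewrite /odd_ceil => E hk hc hR hV hy hp.
apply: (embeddable_rcons (B := hook c y k) E); try lia.
- by rewrite /= size_diag; lia.
- rewrite /staircase /= -/(staircase _) staircase_diag andbT.
  by apply/allP => q /mem_diag [i ik ->] /=; lia.
- rewrite /= /in_box /=; apply/andP; split; first lia.
  by apply/allP => q /mem_diag [i ik ->] /=; lia.
- rewrite /= /odd_ceil; apply/andP; split; first lia.
  by apply/allP => q /mem_diag [i ik ->] /=; lia.
Qed.

Lemma embeddable_greedy ks : all (fun k => 0 < k) ks ->
  embeddable ks (odd_ceil (sumn ks)) (sumn ks).
Proof.
elim/last_ind: ks => [|ks k IH]; first by move=> _; apply: embeddable_nil.
rewrite all_rcons sumn_rcons => /andP [k0 /IH E].
pose c := odd_ceil (sumn ks) + ~~ odd (sumn ks + k).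
by apply: (embeddable_diag E (c := c) (y := sumn ks + k)); rewrite /c /odd_ceil; lia.
Qed.

Lemma embeddable_even ks : all (fun k => 0 < k) ks -> ks != [::] -> ~~ odd (sumn ks) ->
  embeddable ks (sumn ks).+1 (sumn ks).-1 \/ embeddable ks (sumn ks).-1 (sumn ks).+1.
Proof.
elim/last_ind: ks => [|ks k IH] //; rewrite all_rcons sumn_rcons => /andP [k0 pos] _ ev.
have [ok|ek] := boolP (odd k).
  right; have E := embeddable_greedy pos.
  by apply: (embeddable_diag E (c := sumn ks) (y := (sumn ks + k).+1));
    rewrite /odd_ceil; lia.
have [->|ne] := eqVneq ks [::].
  left; have E := embeddable_nil 0 0.
  by apply: (embeddable_hook E (c := 1) (y := k.-1)); rewrite /odd_ceil /=; lia.
have eb : ~~ odd (sumn ks) by lia.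
have b0 := sumn_gt0 pos ne.
have [E|E] := IH pos ne eb; [left | right].
- by apply: (embeddable_diag E (c := (sumn ks).+1) (y := (sumn ks + k).-1));
    rewrite /odd_ceil; lia.
- by apply: (embeddable_diag E (c := (sumn ks).-1) (y := (sumn ks + k).+1));
    rewrite /odd_ceil; lia.
Qed.

Lemma embeddable_square ks : all (fun k => 0 < k) ks ->
  (size ks = 1 -> odd (sumn ks)) -> embeddable ks (sumn ks) (sumn ks).
Proof.
move=> pos single; have [on|ev] := boolP (odd (sumn ks)).
  by have := embeddable_greedy pos; rewrite /odd_ceil on addn0.
move: pos single ev; case/lastP: ks => [|ks k]; first by move=> *; apply: embeddable_nil.
rewrite all_rcons sumn_rcons size_rcons => /andP [k0 pos] single ev.
have [ok|ek] := boolP (odd k).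
  have E := embeddable_greedy pos.
  by apply: (embeddable_diag E (c := (sumn ks).+1) (y := sumn ks + k));
    rewrite /odd_ceil; lia.
have [ks0|ne] := eqVneq ks [::].
  by move: single ev; rewrite ks0 /= => ->.
have eb : ~~ odd (sumn ks) by lia.
have b0 := sumn_gt0 pos ne.
have [E|E] := embeddable_even pos ne eb.
- by apply: (embeddable_diag E (c := (sumn ks).+1) (y := (sumn ks + k).-1));
    rewrite /odd_ceil; lia.
- by apply: (embeddable_hook E (c := sumn ks) (y := sumn ks + k));
    rewrite /odd_ceil; lia.
Qed.

Theorem proposition6p3 (n : nat) (pi zeta : seq nat) :
  1 <= n -> size pi = n -> is_perm pi -> layered pi ->
  ~ (pi = decr n /\ ~~ odd n) ->
  is_zeta n zeta ->
  contains zeta pi.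
Proof.
move=> _ sp ip [ks0 epi0] nd hz.
have epi : pi = dsum_decr [seq k <- ks0 | 0 < k] by rewrite dsum_decr_filter.
move: epi (filter_all (fun k => 0 < k) ks0); move: [seq k <- _ | _] => ks epi pos.
have sn : sumn ks = n by rewrite -size_dsum_decr -epi.
have single : size ks = 1 -> odd (sumn ks).
  case: ks epi sn {pos} => [|k [|//]] //= epi sn _; rewrite addn0 in sn *.
  by apply: contraT => ev; case: nd; rewrite epi -sn /= dsums0.
have [P [sP asc inP zP]] := embeddable_square pos single.
rewrite sn in inP; apply: (contains_points hz _ inP zP).
- by rewrite (perm_uniq ip) iota_uniq.
- by rewrite sP epi size_dsum_decr.
- by rewrite epi.
Qed.
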